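(* Let $\mathfrak h\subseteq\Phi^+$ be a Hessenberg set, let $w,v\in W$ and suppose $v$ is a cover of $w$, with $v=s_\alpha w$, $\alpha\in\Phi^+$. Let $\beta\in N_v$. Then: (1) if $\beta\in s_\alpha N_w\cap\Phi^+$, then $\beta\in N^{\mathfrak h}_v$ if and only if $s_\alpha\beta\in N^{\mathfrak h}_w$; (2) if $\beta\in N_w\cap s_\alpha\Phi^-$ and $\beta\in N^{\mathfrak h}_v$, then $\beta\in N^{\mathfrak h}_w$.
   Context: $\Phi$ is a crystallographic root system in a real Euclidean space with base $\Delta$, positive roots $\Phi^+$, $\Phi^-=-\Phi^+$, Weyl group $W$ with length function $\ell$, and $s_\alpha$ the reflection through $\alpha$. Write $\alpha\prec\beta$ if $\beta-\alpha$ is a sum of positive roots. A Hessenberg set is a subset $\mathfrak h\subseteq\Phi^+$ whose complement in $\Phi^+$ is upward closed for $\prec$. For $w\in W$, $N_w=\{\alpha\in\Phi^+: w^{-1}\alpha\in\Phi^-\}$ and $N^{\mathfrak h}_w=\{\alpha\in\Phi^+: w^{-1}\alpha\in-\mathfrak h\}$. For $\alpha\in\Phi^+$ the Bruhat graph has an edge $u\to s_\alpha u$ when $(s_\alpha u)^{-1}\alpha\in\Phi^-$. We say $v$ is a cover of $w$ if $v=s_\alpha w$ for some $\alpha\in\Phi^+$ with $w\to v$ an edge of the Bruhat graph and $\ell(v)=\ell(w)+1$. *)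

(* Root systems are modelled concretely in the Euclidean
   space R^n (column vectors 'cV[R]_n, standard inner product), R : realType. *)
From HB Require Import structures.
From mathcomp Require Import all_boot all_order all_algebra.
From mathcomp Require Import reals.
Set Implicit Arguments. Unset Strict Implicit. Unset Printing Implicit Defensive.
Import Order.TTheory GRing.Theory Num.Theory.
Local Open Scope ring_scope.

Section RootSystems.
Variables (R : realType) (n : nat).
Notation vec := 'cV[R]_n.
Notation mat := 'M[R]_n.

Definition dot (x y : vec) : R := (x^T *m y) 0 0.

(* the reflection s_a as a matrix: s_a x = x - 2 (x,a)/(a,a) a *)
Definition refl_mx (a : vec) : mat :=
  1%:M - (2 / dot a a) *: (a *m a^T).

Definition root_system (Phi : seq vec) : Prop :=
  [/\ uniq Phi,
      (0 : vec) \notin Phi,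
      (forall a b, a \in Phi -> b \in Phi -> refl_mx a *m b \in Phi),
      (forall a b, a \in Phi -> b \in Phi ->
          exists z : int, 2 * dot b a / dot a a = z%:~R)
    & (forall a (c : R), a \in Phi -> c *: a \in Phi -> c = 1 \/ c = -1)].

Definition is_base (Phi Delta : seq vec) : Prop :=
  [/\ {subset Delta <= Phi},
      (forall c : 'I_(size Delta) -> R,
          \sum_(i < size Delta) c i *: Delta`_i = 0 -> forall i, c i = 0)
    & (forall b, b \in Phi -> exists c : 'I_(size Delta) -> int,
          b = \sum_(i < size Delta) (c i)%:~R *: Delta`_i /\
          ((forall i, 0 <= c i) \/ (forall i, c i <= 0)))].

Definition pos_root (Phi Delta : seq vec) (b : vec) : Prop :=
  b \in Phi /\ exists c : 'I_(size Delta) -> nat,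
          b = \sum_(i < size Delta) (c i)%:R *: Delta`_i.
Definition neg_root (Phi Delta : seq vec) (b : vec) : Prop :=
  pos_root Phi Delta (- b).

Definition prec (Phi Delta : seq vec) (a b : vec) : Prop :=
  exists s : seq vec, (forall x, x \in s -> pos_root Phi Delta x) /\
    b - a = \sum_(x <- s) x.

Definition hessenberg (Phi Delta : seq vec) (h : vec -> Prop) : Prop :=
  (forall a, h a -> pos_root Phi Delta a) /\
  (forall a b, pos_root Phi Delta a -> ~ h a ->
      pos_root Phi Delta b -> prec Phi Delta a b -> ~ h b).

Definition prod_refl (s : seq vec) : mat := foldr (fun a m => refl_mx a *m m) 1%:M s.

Definition in_weyl (Phi : seq vec) (w : mat) : Prop :=
  exists s : seq vec, {subset s <= Phi} /\ w = prod_refl s.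

Definition has_length (Delta : seq vec) (w : mat) (k : nat) : Prop :=
  (exists s : seq vec, {subset s <= Delta} /\ size s = k /\ w = prod_refl s) /\
  (forall s : seq vec, {subset s <= Delta} -> w = prod_refl s -> (k <= size s)%N).

Definition Nset (Phi Delta : seq vec) (w : mat) (b : vec) : Prop :=
  pos_root Phi Delta b /\ neg_root Phi Delta (invmx w *m b).
Definition Nhset (Phi Delta : seq vec) (h : vec -> Prop) (w : mat) (b : vec) : Prop :=
  pos_root Phi Delta b /\ h (- (invmx w *m b)).

Definition bruhat_edge (Phi Delta : seq vec) (a : vec) (u : mat) : Prop :=
  pos_root Phi Delta a /\ neg_root Phi Delta (invmx (refl_mx a *m u) *m a).

Definition cover_by (Phi Delta : seq vec) (a : vec) (w v : mat) : Prop :=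
  [/\ pos_root Phi Delta a, v = refl_mx a *m w, bruhat_edge Phi Delta a w
    & exists k, has_length Delta w k /\ has_length Delta v k.+1].

End RootSystems.

(* Write s = s_alpha.  As s is an involution, v^-1 = w^-1 s, so
   v^-1 beta = w^-1 (s beta), which already gives (1).  For (2), beta is
   positive and s beta negative; by the crystallographic condition
   s beta = beta - k alpha for an integer k, and k < 0 is impossible since then
   -beta = |k| alpha - s beta would be a nonnegative combination of simple roots
   as well as beta.  Hence -w^-1 (s beta) = -w^-1 beta + k w^-1 alpha, where
   w^-1 alpha is positive because w -> v is a Bruhat edge; so -w^-1 beta
   precedes -w^-1 (s beta), and the Hessenberg set, being closed downwards,
   contains it. *)
From HB Require Import structures.
From mathcomp Require Import all_boot all_order all_algebra.
From mathcomp Require Import boolp reals.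

Set Implicit Arguments. Unset Strict Implicit. Unset Printing Implicit Defensive.
Import Order.TTheory GRing.Theory Num.Theory.
Local Open Scope ring_scope.

Lemma invmxM (R : comUnitRingType) (n : nat) (A B : 'M[R]_n) :
  A \in unitmx -> B \in unitmx -> invmx (A *m B) = invmx B *m invmx A.
Proof.
move=> uA uB; have uAB : A *m B \in unitmx by rewrite unitmx_mul uA.
by rewrite -[RHS]mul1mx -(mulVmx uAB) -!mulmxA (mulKVmx uB) (mulmxV uA) mulmx1.
Qed.

Section Reflections.
Variables (R : realType) (n : nat).
Implicit Types (a x y : 'cV[R]_n) (w : 'M[R]_n).

Lemma dotC x y : dot x y = dot y x.
Proof. by rewrite /dot -[x^T *m y]trmxK mxE trmx_mul trmxK. Qed.

Lemma dot_self_neq0 a : a != 0 -> dot a a != 0.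
Proof.
apply: contraNneq; rewrite /dot mxE => sum0; apply/eqP/matrixP => i j.
have sq_ge0 k : predT k -> 0 <= a^T 0 k * a k 0 by rewrite mxE -expr2 sqr_ge0.
move/eqP: (psumr_eq0P sq_ge0 sum0 (i := i) isT).
by rewrite (ord1 j) !mxE mulf_eq0 orbb => /eqP.
Qed.

Lemma refl_mxE a x : refl_mx a *m x = x - (2 * dot x a / dot a a) *: a.
Proof.
rewrite /refl_mx mulmxBl mul1mx -scalemxAl -mulmxA [a^T *m x]mx11_scalar.
by rewrite mul_mx_scalar scalerA -/(dot a x) dotC mulrAC.
Qed.

Lemma refl_mx_root a : a != 0 -> refl_mx a *m a = - a.
Proof.
move=> a0; rewrite refl_mxE mulfK ?dot_self_neq0 //.
by rewrite scaler_nat mulr2n opprD addrA subrr add0r.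
Qed.

Lemma refl_mxK a : a != 0 -> refl_mx a *m refl_mx a = 1%:M.
Proof.
move=> a0; rewrite {2}/refl_mx mulmxBr mulmx1 -scalemxAr mulmxA refl_mx_root //.
by rewrite mulNmx scalerN opprK /refl_mx subrK.
Qed.

Lemma invmx_refl a : a != 0 -> invmx (refl_mx a) = refl_mx a.
Proof.
move=> a0; have [sU _] := mulmx1_unit (refl_mxK a0).
by rewrite -[LHS]mulmx1 -(refl_mxK a0) mulmxA mulVmx // mul1mx.
Qed.

Lemma invmx_reflM a w :
  a != 0 -> w \in unitmx -> invmx (refl_mx a *m w) = invmx w *m refl_mx a.
Proof.
move=> a0 wU; have [sU _] := mulmx1_unit (refl_mxK a0).
by rewrite invmxM // invmx_refl.
Qed.

Lemma weyl_unitmx (Phi : seq 'cV[R]_n) w :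
  (0 : 'cV[R]_n) \notin Phi -> in_weyl Phi w -> w \in unitmx.
Proof.
move=> Phi0 [s [sPhi ->]]; elim: s sPhi => [|a s IH] sPhi /=; first exact: unitmx1.
have a0 : a != 0 by apply: contraNneq Phi0 => <-; rewrite sPhi ?mem_head.
have [sU _] := mulmx1_unit (refl_mxK a0).
by rewrite unitmx_mul sU IH // => x xs; rewrite sPhi // inE xs orbT.
Qed.

End Reflections.

Section PositiveRoots.
Variables (R : realType) (n : nat) (Phi Delta : seq 'cV[R]_n).
Implicit Types (a b x y : 'cV[R]_n) (w : 'M[R]_n) (h : 'cV[R]_n -> Prop).

Definition nat_comb x : Prop :=
  exists c : 'I_(size Delta) -> nat, x = \sum_(i < size Delta) (c i)%:R *: Delta`_i.

Lemma nat_combD x y : nat_comb x -> nat_comb y -> nat_comb (x + y).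
Proof.
move=> [c ->] [d ->]; exists (fun i => (c i + d i)%N); rewrite -big_split.
by apply: eq_bigr => i _; rewrite natrD scalerDl.
Qed.

Lemma nat_combMn x k : nat_comb x -> nat_comb (x *+ k).
Proof.
move=> [c ->]; exists (fun i => (c i * k)%N); rewrite -sumrMnl.
by apply: eq_bigr => i _; rewrite natrM mulr_natr scalerMnl.
Qed.

Lemma nat_comb_pointed x :
  is_base Phi Delta -> nat_comb x -> nat_comb (- x) -> x = 0.
Proof.
move=> [_ indep _] [c xE] [d xNE].
have : x + - x = \sum_(i < size Delta) (c i + d i)%:R *: Delta`_i.
  rewrite {1}xE xNE -big_split.
  by apply: eq_bigr => i _; rewrite natrD scalerDl.
rewrite subrr => /esym sum0.
rewrite xE big1 // => i _; move/eqP: (indep _ sum0 i).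
by rewrite pnatr_eq0 addn_eq0 => /andP[/eqP-> _]; rewrite scale0r.
Qed.

(* The multiple k is the Cartan integer <b, a^v>, which cannot be negative here. *)
Lemma refl_neg_root a b :
  root_system Phi -> is_base Phi Delta -> pos_root Phi Delta a ->
  pos_root Phi Delta b -> neg_root Phi Delta (refl_mx a *m b) ->
  exists k : nat, refl_mx a *m b = b - a *+ k.
Proof.
move=> [_ Phi0 _ cartan _] base [aPhi a_comb] [bPhi b_comb] [_ sbN_comb].
have [[k|k] z_eq] := cartan a b aPhi bPhi; rewrite refl_mxE z_eq.
  by exists k; rewrite scaler_nat.
have bNE : - b = a *+ k.+1 + - (refl_mx a *m b).
  by rewrite refl_mxE z_eq NegzE mulrNz scaleNr opprK scaler_nat opprD addrCA subrr addr0.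
have /(nat_comb_pointed base b_comb) b0 : nat_comb (- b).
  by rewrite bNE; apply: nat_combD => //; apply: nat_combMn.
by move: Phi0; rewrite -b0 bPhi.
Qed.

Lemma prec_addMn a c k : pos_root Phi Delta c -> prec Phi Delta a (a + c *+ k).
Proof.
move=> c_pos; exists (nseq k c); split; first by move=> x /nseqP[->].
rewrite addrAC subrr add0r; elim: k => [|k IH]; first by rewrite big_nil.
by rewrite big_cons -IH mulrS.
Qed.

Lemma hessenberg_prec_closed h a b :
  hessenberg Phi Delta h -> pos_root Phi Delta a -> h b -> prec Phi Delta a b -> h a.
Proof.
move=> [h_pos h_up] a_pos hb ab.
by apply: contra_notP (fun ha => h_up a b a_pos ha (h_pos b hb) ab) _.
Qed.

Lemma bruhat_edge_pos_root a w :
  a != 0 -> w \in unitmx -> bruhat_edge Phi Delta a w ->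
  pos_root Phi Delta (invmx w *m a).
Proof.
move=> a0 wU [_]; rewrite /neg_root invmx_reflM // -mulmxA refl_mx_root //.
by rewrite mulmxN opprK.
Qed.

End PositiveRoots.

Theorem proposition2p9 (R : realType) (n : nat) (Phi Delta : seq 'cV[R]_n)
  (h : 'cV[R]_n -> Prop) (w v : 'M[R]_n) (alpha beta : 'cV[R]_n) :
  root_system Phi -> is_base Phi Delta -> hessenberg Phi Delta h ->
  in_weyl Phi w -> in_weyl Phi v ->
  cover_by Phi Delta alpha w v ->
  Nset Phi Delta v beta ->
  ((exists g, Nset Phi Delta w g /\ beta = refl_mx alpha *m g) ->
     pos_root Phi Delta beta ->
     (Nhset Phi Delta h v beta <-> Nhset Phi Delta h w (refl_mx alpha *m beta))) /\
  (Nset Phi Delta w beta ->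
     (exists g, neg_root Phi Delta g /\ beta = refl_mx alpha *m g) ->
     Nhset Phi Delta h v beta -> Nhset Phi Delta h w beta).
Proof.
move=> rootPhi base hess weyl_w _ [a_pos -> edge _] [b_pos _].
have [_ Phi0 _ _ _] := rootPhi.
have a0 : alpha != 0 by apply: contraNneq Phi0 => <-; case: a_pos.
have wU := weyl_unitmx Phi0 weyl_w.
have vinvE : invmx (refl_mx alpha *m w) *m beta = invmx w *m (refl_mx alpha *m beta).
  by rewrite invmx_reflM // mulmxA.
have reflK g : refl_mx alpha *m (refl_mx alpha *m g) = g.
  by rewrite mulmxA refl_mxK // mul1mx.
split.
  move=> [g [[g_pos _] b_eq]] _.
  have sbE : refl_mx alpha *m beta = g by rewrite b_eq reflK.
  by rewrite /Nhset vinvE sbE; split=> [[_ hg]|[_ hg]].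
move=> [_ wb_neg] [g [g_neg b_eq]] [_ h_sb].
have [k sbE] : exists k : nat, refl_mx alpha *m beta = beta - alpha *+ k.
  by apply: (refl_neg_root rootPhi base a_pos b_pos); rewrite b_eq reflK.
split=> //; apply: hessenberg_prec_closed hess wb_neg h_sb _.
rewrite vinvE sbE mulmxBr (raddfMn (mulmx (invmx w))) opprB addrC.
by apply: prec_addMn; apply: bruhat_edge_pos_root.
Qed.
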